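(* Let $v^{(1)},\dots,v^{(p)}\in\mathbb{R}^n$ (all entries finite) and let $V$ be the $n\times p$ matrix with columns $v^{(k)}$. Then the operator $T:\mathbb{R}^n\to\mathbb{R}^n$, $$T_i(x)=\min_{k\in[p]}\Big[-V_{ik}+\max_{j\in[n],\,j\neq i}(V_{jk}+x_j)\Big],\qquad i\in[n],$$ has a finite eigenvector, i.e., there exist $a\in\mathbb{R}^n$ and $\lambda\in\mathbb{R}$ such that $T(a)=\lambda+a$ (and then $\lambda=\rho(T)$).
   Context: $\lambda+a$ denotes $(\lambda+a_i)_i$. $\rho(T)=\sup\{\lambda\in\mathbb{R}\cup\{-\infty\}:\exists u\in(\mathbb{R}\cup\{-\infty\})^n,\ u\not\equiv-\infty,\ T(u)=\lambda+u\}$ for $T$ extended to $(\mathbb{R}\cup\{-\infty\})^n$ by the same formula. Here $n\ge2$ is implicit. *)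

From HB Require Import structures.
From mathcomp Require Import all_boot all_order all_algebra.
From mathcomp Require Import all_classical all_reals ereal.
Set Implicit Arguments. Unset Strict Implicit. Unset Printing Implicit Defensive.
Import Order.TTheory GRing.Theory Num.Theory.
Local Open Scope ring_scope.
Local Open Scope ereal_scope.

(* The operator T_i(x) = min_k [ -V_ik + max_{j<>i} (V_jk + x_j) ],
   defined on (R u {-oo})^n (we use \bar R and only feed it vectors with
   no +oo entry).  With n >= 2 and p >= 1 the min / max are over nonempty
   index sets, so the neutral elements +oo / -oo never matter. *)
Definition Top (R : realType) (n p : nat) (V : 'M[R]_(n, p))
    (x : 'I_n -> \bar R) (i : 'I_n) : \bar R :=
  \big[Order.min/+oo]_(k < p)
     ( - (V i k)%:E + \big[Order.max/-oo]_(j < n | j != i) ((V j k)%:E + x j)).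

Definition admissible_vec (R : realType) (n : nat) (u : 'I_n -> \bar R) : Prop :=
  (forall j, u j != +oo) /\ (exists j, u j != -oo).

Definition rho (R : realType) (n p : nat) (V : 'M[R]_(n, p)) : \bar R :=
  ereal_sup [set lam : \bar R | lam != +oo /\
     exists u : 'I_n -> \bar R, admissible_vec u /\
       forall i, Top V u i = lam + u i].

From mathcomp Require Import all_boot all_order all_algebra.
From mathcomp Require Import all_classical all_reals ereal.
From mathcomp Require Import topology normedtype sequences.
From mathcomp Require Import ring lra.

Set Implicit Arguments.
Unset Strict Implicit.
Unset Printing Implicit Defensive.
Import Order.TTheory GRing.Theory Num.Theory numFieldNormedType.Exports.
Local Open Scope classical_set_scope.
Local Open Scope ring_scope.

(* T is monotone, commutes with adding constants, and T_i(x) lies within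
   2 max |V_ik| of max_{j <> i} x_j.  For 0 <= b < 1 the discounted map
   x |-> T(b x) has a fixed point x_b, the decreasing limit of its iterates from
   a large constant vector.  The entries of x_b are within 2 max |V_ik| of each
   other, and x_b - x_b(i0) is an eigenvector of T up to an error of order 1 - b,
   so by compactness and nonexpansiveness a cluster point of these vectors as
   b -> 1 is an exact eigenvector a.  No admissible u has a larger eigenvalue:
   compare u with a + max_j (u_j - a_j) at a coordinate attaining the maximum. *)

Lemma bounded_seq_cluster {R : realType} {n : nat} (M : R) (u : nat -> 'I_n -> R) :
  (forall k j, `|u k j| <= M) ->
  exists c : 'I_n -> R, forall P : set nat, (\forall k \near \oo, P k) ->
    forall e, 0 < e -> exists2 k, P k & forall j, `|c j - u k j| < e.
Proof.
move=> u_le.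
pose box := [set v : 'rV[R]_n | forall j, `[- M, M]%classic (v ord0 j)].
have box_compact : compact box.
  exact: (@rV_compact R n (fun=> `[- M, M]%classic) (fun=> @segment_compact R (-M) M)).
have [c [_ c_cluster]] : box `&` cluster ((fun k => \row_j u k j) @ \oo) !=set0.
  apply: box_compact; exists 0%N => // k _ j.
  by rewrite /= mxE in_itv /= -ler_norml.
exists (fun j => c ord0 j) => P P_near e e_gt0.
have near_image : \forall k \near \oo, ((fun k => \row_j u k j) @` P) (\row_j u k j).
  by apply: filterS P_near => k Pk; exists k.
have [_ [[k Pk <-] [_ c_near]]] := c_cluster _ _ near_image (nbhsx_ballx c _ e_gt0).
by exists k => // j; have := c_near ord0 j; rewrite /ball /= mxE.
Qed.

Section MonotoneHomogeneous.
Context {R : realType} {n : nat} (F : ('I_n -> R) -> 'I_n -> R).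
Hypothesis F_mono : forall x y i, (forall j, x j <= y j) -> F x i <= F y i.
Hypothesis F_shift : forall x c i, F (fun j => x j + c) i = F x i + c.

Lemma le_shift_map x y c i : (forall j, x j <= y j + c) -> F x i <= F y i + c.
Proof. by move=> xy; rewrite -F_shift; apply: F_mono. Qed.

Lemma map_nonexpansive x y e i :
  (forall j, `|x j - y j| <= e) -> `|F x i - F y i| <= e.
Proof.
move=> xy; have xy' j : x j <= y j + e /\ y j <= x j + e.
  by have := xy j; rewrite ler_norml => /andP[]; split; lra.
have Fxy : F x i <= F y i + e by apply: le_shift_map => j; case: (xy' j).
have Fyx : F y i <= F x i + e by apply: le_shift_map => j; case: (xy' j).
by rewrite ler_norml; apply/andP; split; lra.
Qed.

Section Discount.
Variable b : R.
Hypotheses (b_ge0 : 0 <= b) (b_lt1 : b < 1).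

Let K := \big[Num.max/0]_i `|F (fun=> 0) i|.

Let K_ge0 : 0 <= K. Proof. exact: bigmax_ge_id. Qed.

Let F0_bound i : `|F (fun=> 0) i| <= K. Proof. exact: le_bigmax. Qed.

Let G x i := F (fun j => b * x j) i.
Let C := K / (1 - b).
Let y k := iter k G (fun=> C).

Let C_fixed : K + b * C = C.
Proof. by rewrite /C; field; rewrite subr_eq0 gt_eqF. Qed.

Let G_cst a i : G (fun=> a) i = F (fun=> 0) i + b * a.
Proof. by rewrite /G -F_shift; congr F; apply: funext => j; rewrite add0r. Qed.

Let y_succ_le k i : y k.+1 i <= y k i.
Proof.
elim: k i => [|k IHk] i; rewrite /y /=; last first.
  by apply: F_mono => j; rewrite ler_wpM2l //; apply: IHk.
rewrite G_cst -[leRHS]C_fixed lerD2r.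
by have := F0_bound i; rewrite ler_norml => /andP[].
Qed.

Let y_ge k i : - C <= y k i.
Proof.
have C_ge0 : 0 <= C by rewrite /C divr_ge0 // subr_ge0 ltW.
elim: k i => [|k IHk] i; rewrite /y /=; first lra.
apply: (@le_trans _ _ (G (fun=> - C) i)).
  rewrite G_cst mulrN -[in leLHS]C_fixed opprD lerD2r.
  by have := F0_bound i; rewrite ler_norml => /andP[].
by apply: F_mono => j; rewrite ler_wpM2l //; apply: IHk.
Qed.

Lemma discounted_fixed_point : exists x, forall i, F (fun j => b * x j) i = x i.
Proof.
have y_cvg i : y k i @[k --> \oo] --> inf (range (fun k => y k i)).
  apply: nonincreasing_cvgn; first by apply/nonincreasing_seqP => k; apply: y_succ_le.
  by exists (- C) => _ [k _ <-]; apply: y_ge.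
pose L i := inf (range (fun k => y k i)).
exists L => i.
have y_succ_cvg : y k.+1 i @[k --> \oo] --> G L i.
  apply/cvgrPdist_le => e e0.
  have : \forall k \near \oo, forall j, `|L j - y k j| <= e.
    by apply: filter_forall => j; apply: (cvgrPdist_le _ _).1 (y_cvg j) e e0.
  apply: filterS => k Lyk; apply: map_nonexpansive => j.
  rewrite -mulrBr normrM ger0_norm //; apply: le_trans (Lyk j).
  by rewrite ler_piMl // ltW.
have := y_cvg i; rewrite -cvg_shiftS => y_succ_cvgL.
exact: (cvg_unique (@norm_hausdorff _ R^o) y_succ_cvg y_succ_cvgL).
Qed.
End Discount.

Lemma eigenvector_of_approx (i0 : 'I_n) (M : R) :
  (forall e, 0 < e -> exists2 d, (forall j, `|d j| <= M) &
     forall i, `|F d i - d i - (F d i0 - d i0)| <= e) ->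
  exists (d : 'I_n -> R) (c : R), forall i, F d i = d i + c.
Proof.
move=> approx.
have [d d_le d_approx] : exists2 d : nat -> 'I_n -> R, (forall k j, `|d k j| <= M) &
    forall k i, `|F (d k) i - d k i - (F (d k) i0 - d k i0)| <= k.+1%:R^-1.
  have /choice[d dP] k : exists d : 'I_n -> R, (forall j, `|d j| <= M) /\
      forall i, `|F d i - d i - (F d i0 - d i0)| <= k.+1%:R^-1.
    by have [|d ? ?] := approx k.+1%:R^-1; [rewrite invr_gt0 | exists d].
  by exists d => k; case: (dP k).
have [c c_cluster] := bounded_seq_cluster d_le.
exists c, (F c i0 - c i0) => i.
apply/eqP; rewrite -subr_eq0 -normr_le0; apply/ler_addgt0Pr => e e_gt0.
have e5_gt0 : 0 < e / 5 by rewrite divr_gt0.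
have [k k_small c_near] :=
  c_cluster _ (near_infty_natSinv_lt (PosNum e5_gt0)) _ e5_gt0.
have c_near_d j : `|c j - d k j| <= e / 5 := ltW (c_near j).
move: k_small (map_nonexpansive i c_near_d) (map_nonexpansive i0 c_near_d).
move: (c_near_d i) (c_near_d i0) (d_approx k i).
(* lra cannot see through the inverse of the non-constant k.+1, so it is named. *)
rewrite /= add0r !ler_norml; set q := k.+1%:R^-1; clearbody q.
move=> /andP[? ?] /andP[? ?] /andP[? ?] ? /andP[? ?] /andP[? ?].
apply/andP; split; lra.
Qed.

Section NearOffDiagonalMax.
Variable K : R.
Hypothesis F_ge : forall x i j, j != i -> x j - K <= F x i.
Hypothesis F_le : forall x i, exists2 j, j != i & F x i <= x j + K.

Lemma off_diagonal_gap_ge0 (i : 'I_n) : 0 <= K.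
Proof.
have [j j_ne_i Fle] := F_le (fun=> 0) i.
by have := F_ge (fun=> 0) j_ne_i; lra.
Qed.

Lemma discounted_fixed_point_spread (b : R) (x : 'I_n -> R) :
  0 <= b -> (forall i, F (fun j => b * x j) i = x i) ->
  forall i j, `|x i - x j| <= 2 * K.
Proof.
move=> b_ge0 x_fixed i j.
have [m _ x_max] := arg_maxP x (isT : xpredT i).
have x_le_m z : x z <= x m := x_max z isT.
have K_ge0 := off_diagonal_gap_ge0 i.
have [j' _ xm_le] := F_le (fun j => b * x j) m; rewrite x_fixed in xm_le.
have bx_le : b * x j' <= b * x m by exact: ler_wpM2l.
have x_ge z : x m - 2 * K <= x z.
  have [-> | z_ne_m] := eqVneq z m; first lra.
  by rewrite eq_sym in z_ne_m; have := F_ge (fun j => b * x j) z_ne_m; rewrite x_fixed; lra.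
have := x_ge i; have := x_ge j; have := x_le_m i; have := x_le_m j.
by rewrite ler_norml => ? ? ? ?; apply/andP; split; lra.
Qed.

Lemma discounted_fixed_point_defect (b : R) (x : 'I_n -> R) (i0 i : 'I_n) :
  0 <= b -> b <= 1 -> (forall i, F (fun j => b * x j) i = x i) ->
  `|F x i - x i - (1 - b) * x i0| <= 2 * K * (1 - b).
Proof.
move=> b_ge0 b_le1 x_fixed.
have shifted : F (fun j => b * x j + (1 - b) * x i0) i = x i + (1 - b) * x i0.
  by rewrite F_shift x_fixed.
rewrite -addrA -opprD -shifted; apply: map_nonexpansive => j.
have -> : x j - (b * x j + (1 - b) * x i0) = (1 - b) * (x j - x i0) by ring.
rewrite normrM ger0_norm ?subr_ge0 // mulrC ler_wpM2r ?subr_ge0 //.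
exact: discounted_fixed_point_spread b_ge0 x_fixed j i0.
Qed.

Lemma exists_additive_eigenvector (i0 : 'I_n) :
  exists (d : 'I_n -> R) (c : R), forall i, F d i = d i + c.
Proof.
have K_ge0 := off_diagonal_gap_ge0 i0.
apply: (@eigenvector_of_approx i0 (2 * K)) => e e_gt0.
pose b := 4 * K / (4 * K + e).
have b_ge0 : 0 <= b by rewrite divr_ge0 //; lra.
have one_b : 1 - b = e / (4 * K + e) by rewrite /b; field; lra.
have b_lt1 : b < 1 by rewrite -subr_gt0 one_b divr_gt0 //; lra.
have err_le : 4 * K * (1 - b) <= e.
  by rewrite one_b mulrA ler_pdivrMr; [nra | lra].
have [x x_fixed] := discounted_fixed_point b_ge0 b_lt1.
exists (fun j => x j - x i0) => [j | i].
  exact: discounted_fixed_point_spread b_ge0 x_fixed j i0.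
rewrite !F_shift.
have := discounted_fixed_point_defect i0 i b_ge0 (ltW b_lt1) x_fixed.
have := discounted_fixed_point_defect i0 i0 b_ge0 (ltW b_lt1) x_fixed.
by rewrite !ler_norml => /andP[? ?] /andP[? ?]; apply/andP; split; lra.
Qed.

End NearOffDiagonalMax.

End MonotoneHomogeneous.

Lemma ord_exists_neq (n : nat) : (1 < n)%N -> forall i : 'I_n, exists j : 'I_n, j != i.
Proof.
move=> n_gt1 i; have [->|i_ne] := eqVneq i (Ordinal (ltnW n_gt1)).
  by exists (Ordinal n_gt1); apply/eqP => /(congr1 val).
by exists (Ordinal (ltnW n_gt1)); rewrite eq_sym.
Qed.

Lemma mx_norm_entry_le {R : realDomainType} {m n : nat} (A : 'M[R]_(m, n)) i j :
  `|A i j| <= `|A|.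
Proof. by rewrite [leRHS]mx_normrE (le_bigmax 0 (fun ij => `|A ij.1 ij.2|) (i, j)). Qed.

Section ExtendedBigops.
Context {R : realType}.
Local Open Scope ereal_scope.

Lemma bigmaxe_addr (I : finType) (P : pred I) (G : I -> \bar R) (c : R) :
  \big[Order.max/-oo]_(j | P j) (G j + c%:E) =
  \big[Order.max/-oo]_(j | P j) G j + c%:E.
Proof.
by apply/esym; apply: (big_morph (fun x => x + c%:E)) => [x y|]; [exact: adde_maxl|].
Qed.

Lemma bigmine_addr (I : finType) (P : pred I) (G : I -> \bar R) (c : R) :
  \big[Order.min/+oo]_(j | P j) (G j + c%:E) =
  \big[Order.min/+oo]_(j | P j) G j + c%:E.
Proof.
apply/esym; apply: (big_morph (fun x => x + c%:E)) => // x y.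
have [xy|yx] := leP x y.
  by rewrite !min_l // leeD2r.
by rewrite !min_r // leeD2r // ltW.
Qed.

End ExtendedBigops.

Section TopOperator.
Context {R : realType} {n p : nat} (V : 'M[R]_(n, p)).
Local Open Scope ereal_scope.

Lemma Top_mono (x y : 'I_n -> \bar R) i :
  (forall j, x j <= y j) -> Top V x i <= Top V y i.
Proof.
move=> xy; apply: le_bigmin2 => k _; apply: leeD2l.
by apply: le_bigmax2 => j _; apply: leeD2l.
Qed.

Lemma Top_shift (x : 'I_n -> \bar R) (c : R) i :
  Top V (fun j => x j + c%:E) i = Top V x i + c%:E.
Proof.
rewrite /Top -bigmine_addr; apply: eq_bigr => k _.
rewrite -addeA -bigmaxe_addr; congr (_ + _); apply: eq_bigr => j _.
exact: addeA.
Qed.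

Lemma Top_eigenvalue_le (a : 'I_n -> R) (lam : R) (u : 'I_n -> \bar R) (l : \bar R) :
  (forall i, Top V (fun j => (a j)%:E) i = (lam + a i)%:E) ->
  admissible_vec u -> (forall i, Top V u i = l + u i) -> l <= lam%:E.
Proof.
move=> a_eig [u_fin [j0 u_j0]] u_eig.
pose w j := u j - (a j)%:E.
have [m _ w_max] := arg_maxP w (isT : xpredT j0).
have [r u_m] : exists r, u m = r%:E.
  move: (u_fin m) (w_max j0 isT); rewrite /w.
  case: (u m) => [r _ _| // | _]; first by exists r.
  by case: (u j0) u_j0.
have u_le j : u j <= (a j)%:E + (r - a m)%:E.
  have := w_max j isT; have := u_fin j; rewrite /w u_m.
  case: (u j) => [s | |] //= _ => [|_]; last exact: leNye.
  by rewrite -!EFinD !lee_fin; lra.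
have := Top_mono m u_le; rewrite Top_shift a_eig u_eig u_m -EFinD.
by rewrite (_ : lam + a m + (r - a m) = lam + r)%R ?EFinD ?leeD2rE //; ring.
Qed.

End TopOperator.

Section TopReal.
Context {R : realType} {n p : nat} (V : 'M[R]_(n, p)).
Hypotheses (n_gt1 : (1 < n)%N) (p_gt0 : (0 < p)%N).

Lemma Top_attained (x : 'I_n -> R) i : exists k, exists2 j, j != i &
  Top V (fun j => (x j)%:E) i = (- V i k + (V j k + x j))%:E.
Proof.
have [j0 j0_ne_i] := ord_exists_neq n_gt1 i; rewrite /Top.
have [k _ ->] := eq_bigmin (Ordinal p_gt0) xpredT (fun k => - (V i k)%:E +
  \big[Order.max/-oo]_(j < n | j != i) ((V j k)%:E + (x j)%:E))%E isT (fun k _ => leey _).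
have [j j_ne_i ->] := eq_bigmax j0 (fun j => j != i)
  (fun j => (V j k)%:E + (x j)%:E)%E j0_ne_i (fun j _ => leNye _).
by exists k, j.
Qed.

Definition Top_real (x : 'I_n -> R) i : R := fine (Top V (fun j => (x j)%:E) i).

Lemma Top_realE x i : Top V (fun j => (x j)%:E) i = (Top_real x i)%:E.
Proof. by rewrite /Top_real; have [k [j _ ->]] := Top_attained x i. Qed.

Lemma Top_real_mono x y i : (forall j, x j <= y j) -> Top_real x i <= Top_real y i.
Proof.
by move=> xy; rewrite -lee_fin -!Top_realE; apply: Top_mono => j; rewrite lee_fin.
Qed.

Lemma Top_real_shift x c i : Top_real (fun j => x j + c) i = Top_real x i + c.
Proof.
apply: EFin_inj; rewrite EFinD -!Top_realE -Top_shift.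
by congr Top; apply/funext => j; rewrite EFinD.
Qed.

Lemma Top_real_ge x i j : j != i -> x j - 2 * `|V| <= Top_real x i.
Proof.
move=> j_ne_i; rewrite -lee_fin -Top_realE; apply: le_bigmin => [|k _]; first exact: leey.
have le_max := @le_bigmax_cond _ _ _ -oo%E j (fun j => j != i)
  (fun j => (V j k)%:E + (x j)%:E)%E j_ne_i.
apply: le_trans (leeD2l _ le_max).
rewrite -EFinN -!EFinD lee_fin.
have := mx_norm_entry_le V i k; have := mx_norm_entry_le V j k.
by rewrite !ler_norml => /andP[? ?] /andP[? ?]; lra.
Qed.

Lemma Top_real_le x i : exists2 j, j != i & Top_real x i <= x j + 2 * `|V|.
Proof.
have [k [j j_ne_i Top_eq]] := Top_attained x i.
exists j => //; rewrite -lee_fin -Top_realE Top_eq lee_fin.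
have := mx_norm_entry_le V i k; have := mx_norm_entry_le V j k.
by rewrite !ler_norml => /andP[? ?] /andP[? ?]; lra.
Qed.

End TopReal.

Theorem proposition4p9 (R : realType) (n p : nat) (V : 'M[R]_(n, p)) :
  (2 <= n)%N -> (0 < p)%N ->
  exists (a : 'I_n -> R) (lam : R),
    (forall i : 'I_n, Top V (fun j => (a j)%:E) i = (lam + a i)%:E) /\
    lam%:E = rho V.
Proof.
move=> n_ge2 p_gt0; pose i0 : 'I_n := Ordinal (ltnW n_ge2).
have [a [lam a_eig]] := exists_additive_eigenvector (Top_real_mono V n_ge2 p_gt0)
  (Top_real_shift V n_ge2 p_gt0) (Top_real_ge V n_ge2 p_gt0)
  (Top_real_le V n_ge2 p_gt0) i0.
have a_eigE i : Top V (fun j => (a j)%:E) i = (lam + a i)%:E.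
  by rewrite (Top_realE V n_ge2 p_gt0) a_eig addrC.
exists a, lam; split => //; apply/le_anti/andP; split.
  apply: ereal_sup_ubound; split => //; exists (fun j => (a j)%:E).
  by split => [|i]; [split => //; exists i0 | rewrite a_eigE EFinD].
apply: ge_ereal_sup => l [_ [u [u_adm u_eig]]].
exact: Top_eigenvalue_le a_eigE u_adm u_eig.
Qed.
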